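(* Let $\Pi$ be an equitative protocol for a distribution type $\tau$. Then for every run $\rho$ of $\Pi$, every card $c\in\Omega$ and every agent $P\in\mathcal A$, \[\Pr(c\in H_P\mid\rho)=\frac{|\mathrm{Poss}_{c,P}(\rho)|}{|\mathrm{Poss}(\rho)|}.\]
   Context: Let $\mathcal A$ be a finite set of agents listed in speaking order $P_0,\dots,P_m$. A distribution type is a vector $\tau=(\tau_P)_{P\in\mathcal A}$ of positive integers, $|\tau|=\sum_P\tau_P$. The deck $\Omega$ is a set of $|\tau|$ cards; a deal of type $\tau$ is a partition $H=(H_P)_P$ of $\Omega$ with $|H_P|=\tau_P$. Fix a set of tokens; a run is a finite sequence $\rho=a_0,\dots,a_n$ of tokens, $\rho_{<k}=a_0,\dots,a_{k-1}$. A protocol for $\tau$ is a function $\Pi$ assigning to every deal $H$ and run $\rho$ a set of tokens $\Pi(H,\rho)$ such that if $k$ is the remainder of $|\rho|$ modulo $m+1$ and $H_{P_k}=H'_{P_k}$, then $\Pi(H,\rho)=\Pi(H',\rho)$. An execution is a pair $(H,\rho)$ with $a_k\in\Pi(H,\rho_{<k})$ for all $k\le n$; $\rho$ is a run of $\Pi$ if some $(H,\rho)$ is an execution. $\mathrm{Poss}(\rho)$ is the set of deals $H$ with $(H,\rho)$ an execution, and $\mathrm{Poss}_{c,P}(\rho)$ the set of $H\in\mathrm{Poss}(\rho)$ with $c\in H_P$. $\Pi$ is equitative if for every run $\rho$ of $\Pi$ there is $k=k(\rho)$ with $|\Pi(H,\rho)|=k$ for all $H\in\mathrm{Poss}(\rho)$.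 Probability model: a deal $H$ is drawn uniformly at random among all deals of type $\tau$; then, starting from the empty run, while $\Pi(H,\rho)\ne\emptyset$ for the current run $\rho$, a token is drawn uniformly at random from $\Pi(H,\rho)$ and appended. The event ''$\rho$'' is that the first $|\rho|$ tokens produced are exactly $\rho$. *)

From HB Require Import structures.
From mathcomp Require Import all_boot all_order all_algebra finmap.
Set Implicit Arguments. Unset Strict Implicit. Unset Printing Implicit Defensive.
Import Order.TTheory GRing.Theory Num.Theory.

(* Agents are P_0,...,P_m, represented by 'I_m.+1 (index = speaking order).
   The deck Omega is a finType; tokens live in a choiceType T.
   A "deal candidate" is a family of hands indexed by agents. *)
Definition handsT (m : nat) (Omega : finType) := {ffun 'I_m.+1 -> {set Omega}}.

Definition is_deal (m : nat) (Omega : finType) (tau : 'I_m.+1 -> nat)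
    (H : handsT m Omega) : bool :=
  [forall c : Omega, #|[set P | c \in H P]| == 1] &&
  [forall P, #|H P| == tau P].

Definition protocolT (m : nat) (Omega : finType) (T : choiceType) :=
  handsT m Omega -> seq T -> {fset T}.

(* The protocol condition: the set of allowed tokens depends only on the hand
   of the agent P_k whose turn it is, k = |rho| mod (m+1). *)
Definition is_protocol (m : nat) (Omega : finType) (T : choiceType)
    (tau : 'I_m.+1 -> nat) (Pi : protocolT m Omega T) : Prop :=
  forall (H H' : handsT m Omega) (rho : seq T) (k : 'I_m.+1),
    is_deal tau H -> is_deal tau H' ->
    nat_of_ord k = size rho %% m.+1 -> H k = H' k -> Pi H rho = Pi H' rho.

Definition execution (m : nat) (Omega : finType) (T : choiceType)
    (tau : 'I_m.+1 -> nat) (Pi : protocolT m Omega T)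
    (H : handsT m Omega) (rho : seq T) : bool :=
  is_deal tau H &&
  [forall k : 'I_(size rho), tnth (in_tuple rho) k \in Pi H (take k rho)].

Definition is_run (m : nat) (Omega : finType) (T : choiceType)
    (tau : 'I_m.+1 -> nat) (Pi : protocolT m Omega T) (rho : seq T) : Prop :=
  exists H, execution tau Pi H rho.

Definition Poss (m : nat) (Omega : finType) (T : choiceType)
    (tau : 'I_m.+1 -> nat) (Pi : protocolT m Omega T) (rho : seq T)
    : {set handsT m Omega} :=
  [set H | execution tau Pi H rho].

Definition PossCP (m : nat) (Omega : finType) (T : choiceType)
    (tau : 'I_m.+1 -> nat) (Pi : protocolT m Omega T) (rho : seq T)
    (c : Omega) (P : 'I_m.+1) : {set handsT m Omega} :=
  [set H in Poss tau Pi rho | c \in H P].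

Definition equitative (m : nat) (Omega : finType) (T : choiceType)
    (tau : 'I_m.+1 -> nat) (Pi : protocolT m Omega T) : Prop :=
  forall rho : seq T, is_run tau Pi rho ->
  exists k : nat, forall H, H \in Poss tau Pi rho -> #|` Pi H rho| = k.

Local Open Scope ring_scope.

(* Probability model: H uniform among deals of type tau; then tokens drawn
   uniformly from Pi(H, current run) while nonempty.
   probJoint H rho = Pr(deal = H and the first |rho| tokens are rho). *)
Definition probJoint (R : realFieldType) (m : nat) (Omega : finType)
    (T : choiceType) (tau : 'I_m.+1 -> nat) (Pi : protocolT m Omega T)
    (H : handsT m Omega) (rho : seq T) : R :=
  if is_deal tau H then
    (#|[set H' : handsT m Omega | is_deal tau H']|%:R)^-1 *
    \prod_(k < size rho)
      (if tnth (in_tuple rho) k \in Pi H (take k rho) then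
         (#|` Pi H (take k rho)|%:R)^-1 else 0)
  else 0.

Definition probRun (R : realFieldType) (m : nat) (Omega : finType)
    (T : choiceType) (tau : 'I_m.+1 -> nat) (Pi : protocolT m Omega T)
    (rho : seq T) : R :=
  \sum_(H : handsT m Omega) probJoint R tau Pi H rho.

Definition probCardGivenRun (R : realFieldType) (m : nat) (Omega : finType)
    (T : choiceType) (tau : 'I_m.+1 -> nat) (Pi : protocolT m Omega T)
    (rho : seq T) (c : Omega) (P : 'I_m.+1) : R :=
  (\sum_(H : handsT m Omega | c \in H P) probJoint R tau Pi H rho)
  / probRun R tau Pi rho.

(* Equitativity says that at every run the number of admissible tokens is the
   same for all deals still possible.  Hence the probability of drawing the
   deal H and then producing rho, a product of the inverse branching factors
   along rho, takes one common nonzero value on Poss(rho) and vanishes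
   elsewhere, so conditioning on rho is uniform on Poss(rho) and the
   conditional probability is a ratio of cardinalities. *)
From HB Require Import structures.
From mathcomp Require Import all_boot all_order all_algebra finmap.
From mathcomp Require Import zify.
Set Implicit Arguments. Unset Strict Implicit. Unset Printing Implicit Defensive.
Import GRing.Theory Num.Theory.
Local Open Scope ring_scope.

Lemma sum_const_on_set (R : nmodType) (I : finType) (B : {set I})
    (p : pred I) (F : I -> R) (K : R) :
  (forall i, F i = if i \in B then K else 0) ->
  \sum_(i | p i) F i = K *+ #|[set i in B | p i]|.
Proof.
move=> FE; rewrite -sumr_const big_mkcond [RHS]big_mkcond.
by apply: eq_bigr => i _; rewrite FE inE; case: (i \in B); case: (p i).
Qed.

Section Executions.

Variables (m : nat) (Omega : finType) (T : choiceType).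
Variables (tau : 'I_m.+1 -> nat) (Pi : protocolT m Omega T).

Lemma execution_take (H : handsT m Omega) (rho : seq T) (i : nat) :
  execution tau Pi H rho -> execution tau Pi H (take i rho).
Proof.
move=> /andP[dealH /forallP exH]; apply/andP; split => //.
apply/forallP => j.
have [j_rho j_i] : (j < size rho)%N /\ (j < i)%N.
  have := ltn_ord j; move: (nat_of_ord j) => n.
  by rewrite size_take; case: ifP => i_lt j_lt; lia.
pose x0 := tnth (in_tuple rho) (Ordinal j_rho).
have := exH (Ordinal j_rho); rewrite !(tnth_nth x0) /= => step_j.
by rewrite nth_take // take_takel // ltnW.
Qed.

Lemma is_run_take (i : nat) (rho : seq T) :
  is_run tau Pi rho -> is_run tau Pi (take i rho).
Proof. by move=> [H exH]; exists H; apply: execution_take. Qed.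

Variable R : realFieldType.

Lemma probJoint_notin_Poss (H : handsT m Omega) (rho : seq T) :
  H \notin Poss tau Pi rho -> probJoint R tau Pi H rho = 0.
Proof.
rewrite inE /execution /probJoint negb_and; case: ifP => //= _.
by move=> /forallPn [k bad_k]; rewrite (bigD1 k) //= (negbTE bad_k) mul0r mulr0.
Qed.

Lemma probJoint_Poss_neq0 (H : handsT m Omega) (rho : seq T) :
  H \in Poss tau Pi rho -> probJoint R tau Pi H rho != 0.
Proof.
rewrite inE => /andP[dealH /forallP exH]; rewrite /probJoint dealH mulf_neq0 //.
  rewrite invr_eq0 pnatr_eq0 -lt0n; apply/card_gt0P.
  by exists H; rewrite inE.
apply/prodf_neq0 => i _; rewrite exH invr_eq0 pnatr_eq0 -lt0n cardfs_gt0.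
by apply/fset0Pn; exists (tnth (in_tuple rho) i); apply: exH.
Qed.

Lemma equitative_probJoint_Poss (rho : seq T) (H H' : handsT m Omega) :
  equitative tau Pi ->
  H \in Poss tau Pi rho -> H' \in Poss tau Pi rho ->
  probJoint R tau Pi H rho = probJoint R tau Pi H' rho.
Proof.
rewrite !inE => eqPi exH exH'.
move: (exH) (exH') => /andP[dealH /forallP stepH] /andP[dealH' /forallP stepH'].
rewrite /probJoint dealH dealH'; congr (_ * _); apply: eq_bigr => i _.
rewrite stepH stepH'.
have run_i : is_run tau Pi (take i rho) by apply: is_run_take; exists H.
have [k card_k] := eqPi _ run_i.
by rewrite !card_k // inE; apply: execution_take.
Qed.

Lemma equitative_probJoint_const (rho : seq T) :
  equitative tau Pi -> is_run tau Pi rho ->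
  exists2 K : R, K != 0 & forall H,
    probJoint R tau Pi H rho = if H \in Poss tau Pi rho then K else 0.
Proof.
move=> eqPi [H0 exH0]; have H0_Poss : H0 \in Poss tau Pi rho by rewrite inE.
exists (probJoint R tau Pi H0 rho); first exact: probJoint_Poss_neq0.
move=> H; case: ifPn => [H_Poss|]; last exact: probJoint_notin_Poss.
exact: equitative_probJoint_Poss.
Qed.

End Executions.

Theorem mainTheorem4 (R : realFieldType) (m : nat) (Omega : finType)
    (T : choiceType) (tau : 'I_m.+1 -> nat) (Pi : protocolT m Omega T) :
  (forall P, (0 < tau P)%N) ->
  #|Omega| = (\sum_(P < m.+1) tau P)%N ->
  is_protocol tau Pi ->
  equitative tau Pi ->
  forall (rho : seq T) (c : Omega) (P : 'I_m.+1),
    is_run tau Pi rho ->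
    probCardGivenRun R tau Pi rho c P =
      #|PossCP tau Pi rho c P|%:R / #|Poss tau Pi rho|%:R.
Proof.
move=> _ _ _ eqPi rho c P run_rho.
have [K K_neq0 probE] := equitative_probJoint_const R eqPi run_rho.
have num : \sum_(H : handsT m Omega | c \in H P) probJoint R tau Pi H rho
    = K *+ #|PossCP tau Pi rho c P|.
  exact: (sum_const_on_set (fun H : handsT m Omega => c \in H P) probE).
have den : \sum_(H : handsT m Omega) probJoint R tau Pi H rho
    = K *+ #|Poss tau Pi rho|.
  rewrite (sum_const_on_set xpredT probE).
  by congr (_ *+ _); apply: eq_card => H; rewrite inE andbT.
rewrite /probCardGivenRun /probRun num den -!(mulr_natl K) invfM mulrACA.
by rewrite divff // mulr1.
Qed.
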